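(* Let $\mathcal M_{A,\partial}$ be an $M$-complex with $A=\{a_1\prec\dots\prec a_N\}$. For $k\le N$ write $A^k=\{a_1\prec\dots\prec a_k\}$ and let $\iota_*$ denote the map in homology induced by the inclusion $\mathbb E(A^j)\hookrightarrow\mathbb E(A)$. (1) An element $a_j\in A$ of degree $l$ is $\partial$-homologically essential if and only if $\dim\iota_*(H_l(\mathbb E(A^j),\partial))=\dim\iota_*(H_l(\mathbb E(A^{j-1}),\partial))+1$. The number of homologically essential elements of degree $k$ equals $\dim H_k(\mathcal M_{A,\partial})$. (2) An element $a_i\in A$ is not homologically essential if and only if $\iota_*H_*(\mathbb E(A^i),\partial)=\iota_*H_*(\mathbb E(A^{i-1}),\partial)$. (3) Elements $a_m,a_n\in A$ with $m>n$ form a $\partial$-pair if and only if $\dim H_*(\mathbb E(A^m),\mathbb E(A^n),\partial)=\dim H_*(\mathbb E(A^{m-1}),\mathbb E(A^{n-1}),\partial)=\dim H_*(\mathbb E(A^{m-1}),\mathbb E(A^n),\partial)+1=\dim H_*(\mathbb E(A^m),\mathbb E(A^{n-1}),\partial)+1.$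
   Context: $\mathbb E$ is a field. An $M$-complex $\mathcal M_{A,\partial}$: $A=\{a_1\prec\dots\prec a_N\}$ a finite linearly ordered set with grading $\deg:A\to\mathbb Z$, $\mathbb E(A)$ the graded vector space with basis $A$, and $\partial$ a degree $-1$ linear map with $\partial^2=0$ and $\partial(a_i)\in\mathrm{span}\{a_1,\dots,a_{i-1}\}$ for all $i$ (an $M$-differential). Each $\mathbb E(A^k)$ is a subcomplex, $\dim H_*$ denotes total dimension and relative homology is that of the quotient complex. $\mathrm{Aut}_T(A)$ is the group of graded automorphisms preserving each $\mathrm{span}\{a_1,\dots,a_i\}$; $M$-differentials $\partial_1,\partial_2$ are equivalent if $\partial_2=g\partial_1g^{-1}$, $g\in\mathrm{Aut}_T(A)$. An $M$-differential is elementary if for each $a\in A$ either $\partial(a)=0$ or $\partial(a)=b$ for some $b\in A$, and $\partial(x)=\partial(y)=z$ with $x,y,z\in A$ implies $x=y$. It is known (Barannikov) that every $M$-differential $\partial$ is equivalent to a unique elementary $M$-differential $\partial_1$. Elements $a_i,a_j$ form a $\partial$-pair if $\partial_1(a_i)=a_j$; an element is $\partial$-homologically essential if it belongs to no $\partial$-pair. *)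

(* An M-complex over a field E on the ordered basis
   A = {a_1 < ... < a_N}, encoded as 'I_N (a_{i+1} <-> ordinal i).
   Vectors of E(A) are row vectors 'rV[E]_N; a linear map f is a matrix F
   acting on the right: v |-> v *m F (so row i of F is f(a_{i+1})). *)
From HB Require Import structures.
From mathcomp Require Import all_boot all_order all_algebra.
Set Implicit Arguments. Unset Strict Implicit. Unset Printing Implicit Defensive.
Import Order.TTheory GRing.Theory Num.Theory.
Local Open Scope ring_scope.

Section MComplex.
Variables (E : fieldType) (N : nat) (deg : 'I_N -> int).

Definition bvec (i : 'I_N) : 'rV[E]_N := delta_mx 0 i.

Definition Mdiff (D : 'M[E]_N) : Prop :=
  [/\ (forall i j, D i j != 0 -> deg j = deg i - 1),
      D *m D = 0 &
      (forall i j, D i j != 0 -> (j < i)%N)].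

Definition AutT (G : 'M[E]_N) : Prop :=
  [/\ G \in unitmx,
      (forall i j, G i j != 0 -> deg j = deg i) &
      (forall i j, G i j != 0 -> (j <= i)%N)].

(* D2 = g D1 g^{-1}  (g^{-1} applied first) *)
Definition equivM (D1 D2 : 'M[E]_N) : Prop :=
  exists G, AutT G /\ D2 = invmx G *m D1 *m G.

Definition elementary (D : 'M[E]_N) : Prop :=
  (forall i, row i D = 0 \/ exists j, row i D = bvec j) /\
  (forall x y z, row x D = bvec z -> row y D = bvec z -> x = y).

(* a_i, a_j form a D-pair: D1(a_i) = a_j for the elementary D1 equivalent
   to D (unique by Barannikov's theorem) *)
Definition dpair (D : 'M[E]_N) (i j : 'I_N) : Prop :=
  exists D1, Mdiff D1 /\ elementary D1 /\ equivM D D1 /\ row i D1 = bvec j.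

Definition essential (D : 'M[E]_N) (i : 'I_N) : Prop :=
  forall j, ~ dpair D i j /\ ~ dpair D j i.

Definition subA (k : nat) : 'M[E]_N :=
  (\sum_(i : 'I_N | (i < k)%N) <<bvec i>>)%MS.

Definition gradedA (l : int) : 'M[E]_N :=
  (\sum_(i : 'I_N | deg i == l) <<bvec i>>)%MS.

Definition cyclesA (D : 'M[E]_N) (l : int) (k : nat) : 'M[E]_N :=
  (subA k :&: gradedA l :&: kermx D)%MS.

Definition boundA (D : 'M[E]_N) (l : int) : 'M[E]_N :=
  (gradedA (l + 1) *m D)%MS.

Definition homdim (D : 'M[E]_N) (l : int) : nat :=
  (\rank (cyclesA D l N) - \rank (boundA D l))%N.

(* dim iota_*(H_l(E(A^k))) inside H_l(E(A)) = dim (Z_l(A^k) + B_l(A)) / B_l(A) *)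
Definition imdim (D : 'M[E]_N) (l : int) (k : nat) : nat :=
  (\rank (cyclesA D l k + boundA D l) - \rank (boundA D l))%N.

Definition tcycles (D : 'M[E]_N) (k : nat) : 'M[E]_N := (subA k :&: kermx D)%MS.
Definition tbound (D : 'M[E]_N) : 'M[E]_N := D.

(* iota_* H_*(E(A^k)) as a subspace of H_*(E(A)) = Z/B, represented
   (correspondence theorem) by its preimage Z(A^k) + B in Z *)
Definition imH (D : 'M[E]_N) (k : nat) : 'M[E]_N := (tcycles D k + tbound D)%MS.

(* dim H_*(E(A^m), E(A^n)) for n <= m: homology of the quotient complex
   E(A^m)/E(A^n); relative cycles {x in E(A^m) | x D in E(A^n)} (which
   contain E(A^n)) modulo relative boundaries E(A^m) D + E(A^n). *)
Definition relcycles (D : 'M[E]_N) (m n : nat) : 'M[E]_N :=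
  (subA m :&: kermx (D *m cokermx (subA n)))%MS.
Definition relhomdim (D : 'M[E]_N) (m n : nat) : nat :=
  (\rank (relcycles D m n) - \rank (subA m *m D + subA n))%N.

End MComplex.

From HB Require Import structures.
From mathcomp Require Import all_boot all_order all_algebra.
From mathcomp Require Import zify.
Set Implicit Arguments. Unset Strict Implicit. Unset Printing Implicit Defensive.
Import Order.TTheory GRing.Theory Num.Theory.
Local Open Scope ring_scope.

(* Barannikov's reduction, run over the basis a_1, a_2, ... in order, conjugates D by a
   triangular graded automorphism into the elementary differential [pairmx p] of a graded
   matching p (a_i |-> a_(p i)).  Every quantity in the statement is the rank of a sum or
   intersection of subspaces built from D, the filtration and the grading, so it is
   invariant under such a conjugation; for [pairmx p] these subspaces are coordinate
   subspaces and the ranks are cardinalities read off from p. *)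

(** * Coordinate subspaces *)

Lemma eqmx_rowP (F : fieldType) m1 m2 n (X : 'M[F]_(m1, n)) (Y : 'M[F]_(m2, n)) :
  (forall v : 'rV[F]_n, (v <= X)%MS = (v <= Y)%MS) -> (X :=: Y)%MS.
Proof.
move=> XY; apply/eqmxP/andP; split; apply/row_subP => i.
  by rewrite -XY row_sub.
by rewrite XY row_sub.
Qed.

Section CoordinateSubspaces.
Variables (E : fieldType) (N : nat).
Implicit Types (P Q : pred 'I_N) (v : 'rV[E]_N).

Definition cspan P : 'M[E]_N := (\sum_(i | P i) <<bvec E i>>)%MS.

Lemma sub_cspanP P v : reflect (forall j, ~~ P j -> v 0 j = 0) (v <= cspan P)%MS.
Proof.
apply: (iffP idP) => [vP j Pj | vP].
  pose proj : 'M[E]_N := diag_mx (\row_k (P k)%:R).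
  have /submxP[w ->] : (v <= proj)%MS.
    apply: submx_trans vP _; apply/sumsmx_subP=> i Pi; rewrite genmxE.
    suff -> : bvec E i = bvec E i *m proj by apply: submxMl.
    apply/rowP=> k; rewrite mul_mx_diag !mxE.
    by case: (eqVneq k i) => [->|ki]; rewrite ?eqxx ?Pi ?mulr1 // ?andbF ?mul0r.
  by rewrite mul_mx_diag !mxE (negbTE Pj) mulr0.
rewrite (row_sum_delta v); apply: summx_sub => j _.
have [Pj|nPj] := boolP (P j); last by rewrite vP // scale0r sub0mx.
by apply/scalemx_sub/(sumsmx_sup j) => //; rewrite genmxE.
Qed.

Lemma bvecE (i j : 'I_N) : bvec E i 0 j = (j == i)%:R.
Proof. by rewrite mxE eqxx. Qed.

Lemma bvec_inj : injective (@bvec E N).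
Proof.
move=> i j /(congr1 (fun v : 'rV[E]_N => v 0 j)); rewrite !bvecE eqxx.
by case: (eqVneq j i) => // _ /eqP; rewrite eq_sym oner_eq0.
Qed.

Lemma bvec_neq0 (i : 'I_N) : bvec E i != 0 :> 'rV[E]_N.
Proof.
apply/eqP => /(congr1 (fun v : 'rV[E]_N => v 0 i)).
by rewrite bvecE mxE eqxx => /eqP; rewrite oner_eq0.
Qed.

Lemma bvec_sub_cspan P i : (bvec E i <= cspan P)%MS = P i.
Proof.
apply/idP/idP => [/sub_cspanP bP | Pi]; last by apply: (sumsmx_sup i); rewrite ?genmxE.
apply/negPn/negP => /bP /eqP; by rewrite mxE !eqxx oner_eq0.
Qed.

Lemma cspanS P Q : (forall i, P i -> Q i) -> (cspan P <= cspan Q)%MS.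
Proof. by move=> PQ; apply/sumsmx_subP=> i /PQ; rewrite genmxE bvec_sub_cspan. Qed.

Lemma eqmx_cspan P Q : (cspan P == cspan Q)%MS = [forall i, P i == Q i].
Proof.
apply/idP/forallP => [/eqmxP PQ i | PQ].
  by rewrite -!bvec_sub_cspan PQ.
by rewrite /cspan (eq_bigl Q) ?submx_refl // => i; apply/eqP.
Qed.

Lemma capmx_cspan P Q : (cspan P :&: cspan Q :=: cspan [predI P & Q])%MS.
Proof.
apply: eqmx_rowP => v; rewrite sub_capmx.
apply/andP/sub_cspanP => [[/sub_cspanP vP /sub_cspanP vQ] j | vPQ].
  by rewrite negb_and => /orP[/vP | /vQ].
by split; apply/sub_cspanP => j nj; apply: vPQ; rewrite /= negb_and nj ?orbT.
Qed.

Lemma addsmx_cspan P Q : (cspan P + cspan Q :=: cspan [predU P & Q])%MS.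
Proof.
apply/eqmxP/andP; split.
  by rewrite addsmx_sub !cspanS // => i PQi; apply/orP; by [left | right].
apply/sumsmx_subP => i /orP[Pi | Qi]; rewrite genmxE.
  by rewrite (submx_trans _ (addsmxSl _ _)) ?bvec_sub_cspan.
by rewrite (submx_trans _ (addsmxSr _ _)) ?bvec_sub_cspan.
Qed.

Lemma cspanT : (cspan predT :=: 1%:M)%MS.
Proof.
by apply/eqmxP; rewrite submx1; apply/row_subP => i; apply/sub_cspanP.
Qed.

Lemma mxrank_cspan P : \rank (cspan P) = #|P|.
Proof.
rewrite (mxdirectP (mxdirect_delta _ (in2W (fun _ _ => id)))) /=.
by rewrite -sum1_card; apply: eq_bigr => i _; rewrite genmxE mxrank_delta.
Qed.

Lemma cspan_mulmx_sub (M : 'M[E]_N) P Q :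
  (forall i j, M i j != 0 -> P i -> Q j) -> (cspan P *m M <= cspan Q)%MS.
Proof.
move=> MPQ; rewrite sumsmxMr; apply/sumsmx_subP => i Pi.
rewrite (eqmxMr M (genmxE _)) -rowE; apply/sub_cspanP => j nQj.
by rewrite mxE; apply: contraNeq nQj => /MPQ; apply.
Qed.

End CoordinateSubspaces.

(** * Invariance under conjugation *)

Section UnitTranslation.
Variables (E : fieldType) (n : nat) (G : 'M[E]_n).
Hypothesis uG : G \in unitmx.

Lemma sub_mulmx_unit m (X : 'M[E]_(m, n)) (v : 'rV[E]_n) :
  (v <= X *m G)%MS = (v *m invmx G <= X)%MS.
Proof. by rewrite -{1}(mulmxKV uG v) submxMfree // row_free_unit. Qed.

Lemma eqmx_mulmx_unit m1 m2 (Y' : 'M[E]_(m1, n)) (Y : 'M[E]_(m2, n)) :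
  (forall v : 'rV[E]_n, (v <= Y')%MS = (v *m invmx G <= Y)%MS) -> (Y' :=: Y *m G)%MS.
Proof. by move=> Y'Y; apply: eqmx_rowP => v; rewrite Y'Y sub_mulmx_unit. Qed.

Lemma mxrank_mulmx_unit m (X : 'M[E]_(m, n)) : \rank (X *m G) = \rank X.
Proof. by rewrite mxrankMfree // row_free_unit. Qed.

Lemma stable_unit_eqmx m (X : 'M[E]_(m, n)) : (X *m G <= X)%MS -> (X *m G :=: X)%MS.
Proof.
move=> sXG; apply/eqmxP/andP; split => //.
by rewrite -(mxrank_leqif_sup sXG) mxrank_mulmx_unit.
Qed.

Lemma stable_unit_invmx m (X : 'M[E]_(m, n)) :
  (X *m G :=: X)%MS -> (X *m invmx G :=: X)%MS.
Proof. by move=> XG; apply: eqmx_trans (eqmxMr _ (eqmx_sym XG)) _; rewrite mulmxK. Qed.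

End UnitTranslation.

Lemma closed_invmx (E : fieldType) N (U : 'M[E]_N) (P : pred 'I_N) : U \in unitmx ->
  (forall i j, U i j != 0 -> P i -> P j) -> forall i j, invmx U i j != 0 -> P i -> P j.
Proof.
move=> uU UP i j nz Pi.
have UPinv := stable_unit_invmx uU (stable_unit_eqmx uU (cspan_mulmx_sub UP)).
have : (row i (invmx U) <= cspan E P)%MS by rewrite rowE -UPinv submxMr ?bvec_sub_cspan.
by move/sub_cspanP => iP; apply: contraNT nz => /iP; rewrite mxE => ->.
Qed.

Section Conjugation.
Variables (E : fieldType) (N : nat) (deg : 'I_N -> int) (G D : 'M[E]_N).
Hypothesis aG : AutT deg G.
Local Notation D' := (invmx G *m D *m G).

Let uG : G \in unitmx. Proof. by case: aG. Qed.

Lemma AutT_cspan (P : pred 'I_N) :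
  (forall i j, G i j != 0 -> P i -> P j) -> (cspan E P *m G :=: cspan E P)%MS.
Proof. by move=> GP; apply/stable_unit_eqmx/cspan_mulmx_sub. Qed.

Lemma AutT_subA k : (subA E N k *m G :=: subA E N k)%MS.
Proof.
by apply: AutT_cspan => i j nz; case: aG => _ _ /(_ i j nz) /leq_ltn_trans; apply.
Qed.

Lemma AutT_gradedA l : (gradedA E deg l *m G :=: gradedA E deg l)%MS.
Proof. by apply: AutT_cspan => i j nz; case: aG => _ /(_ i j nz) ->. Qed.

Lemma sub_mulmx_conj m (X : 'M[E]_(m, N)) (v : 'rV[E]_N) :
  (X *m G :=: X)%MS -> (v *m D' <= X)%MS = (v *m invmx G *m D <= X)%MS.
Proof.
move=> XG; rewrite !mulmxA -[in RHS](submxMfree _ X (_ : row_free G)) ?row_free_unit //.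
by rewrite XG.
Qed.

Lemma mulmx_conj m (X : 'M[E]_(m, N)) :
  (X *m G :=: X)%MS -> (X *m D' :=: X *m D *m G)%MS.
Proof. by move=> /(stable_unit_invmx uG) XG; rewrite !mulmxA; apply/eqmxMr/eqmxMr. Qed.

Lemma kermx_conj : (kermx D' :=: kermx D *m G)%MS.
Proof.
apply: eqmx_mulmx_unit => // v.
by rewrite !sub_kermx !mulmxA mulmx_free_eq0 // row_free_unit.
Qed.

Lemma cyclesA_conj l k : (cyclesA deg D' l k :=: cyclesA deg D l k *m G)%MS.
Proof.
apply: eqmx_mulmx_unit => // v.
by rewrite !sub_capmx kermx_conj -!sub_mulmx_unit // AutT_subA AutT_gradedA.
Qed.

Lemma boundA_conj l : (boundA deg D' l :=: boundA deg D l *m G)%MS.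
Proof. exact/mulmx_conj/AutT_gradedA. Qed.

Lemma tcycles_conj k : (tcycles D' k :=: tcycles D k *m G)%MS.
Proof.
apply: eqmx_mulmx_unit => // v.
by rewrite !sub_capmx kermx_conj -!sub_mulmx_unit // AutT_subA.
Qed.

Lemma imH_conj k : (imH D' k :=: imH D k *m G)%MS.
Proof.
apply: eqmx_trans _ (eqmx_sym (addsmxMr _ _ _)); apply: adds_eqmx (tcycles_conj k) _.
by rewrite /tbound -mulmxA; apply: eqmxMfull; rewrite row_full_unit unitmx_inv.
Qed.

Lemma relcycles_conj m k : (relcycles D' m k :=: relcycles D m k *m G)%MS.
Proof.
apply: eqmx_mulmx_unit => // v.
rewrite !sub_capmx -sub_mulmx_unit // AutT_subA !sub_kermx.
by rewrite !(mulmxA _ _ (cokermx _)) -!submxE (sub_mulmx_conj _ (AutT_subA k)).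
Qed.

Lemma relbound_conj m k :
  (subA E N m *m D' + subA E N k :=: (subA E N m *m D + subA E N k)%MS *m G)%MS.
Proof.
apply: eqmx_trans _ (eqmx_sym (addsmxMr _ _ _)).
exact: adds_eqmx (mulmx_conj (AutT_subA m)) (eqmx_sym (AutT_subA k)).
Qed.

Lemma imdim_conj l k : imdim deg D' l k = imdim deg D l k.
Proof.
rewrite /imdim (adds_eqmx (cyclesA_conj l k) (boundA_conj l)) -addsmxMr.
by rewrite (boundA_conj l) !(mxrank_mulmx_unit uG).
Qed.

Lemma homdim_conj l : homdim deg D' l = homdim deg D l.
Proof. by rewrite /homdim cyclesA_conj boundA_conj !(mxrank_mulmx_unit uG). Qed.

Lemma imH_eq_conj a b : (imH D' a == imH D' b)%MS = (imH D a == imH D b)%MS.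
Proof.
by rewrite !(imH_conj a) !(imH_conj b) !submxMfree ?row_free_unit.
Qed.

Lemma relhomdim_conj m k : relhomdim D' m k = relhomdim D m k.
Proof. by rewrite /relhomdim relcycles_conj relbound_conj !(mxrank_mulmx_unit uG). Qed.

End Conjugation.

(** * Elementary differentials *)

Lemma card_predU1_if (T : finType) (A A' : pred T) (b : bool) (x : T) :
  (forall s, A' s = A s || b && (s == x)) -> #|A'| = (#|A| + (b && ~~ A x))%N.
Proof.
case: b => /= AA'; last first.
  by rewrite addn0; apply: eq_card => s; rewrite -!topredE /= AA' orbF.
by rewrite addnC -cardU1; apply: eq_card => s; rewrite !inE -!topredE /= AA' orbC.
Qed.

Lemma card_predU_subr (T : finType) (A B : pred T) :
  (#|[predU A & B]| - #|B|)%N = #|[predD A & B]|.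
Proof. by have := cardUI A B; have := cardID B A; lia. Qed.

Lemma ltnS_ord N (s m : 'I_N) : (s < m.+1)%N = (s < m)%N || (s == m).
Proof. by rewrite ltnS leq_eqVlt orbC. Qed.

Lemma ord_ltn_eqF N (j i : 'I_N) : (j < i)%N -> (j == i) = false.
Proof. by move=> ji; apply/eqP => e; move: ji; rewrite e ltnn. Qed.

Section Matchings.
Variables (E : fieldType) (N : nat) (p : 'I_N -> option 'I_N).
Implicit Types (v : 'rV[E]_N) (P Q : pred 'I_N).

Definition pairmx : 'M[E]_N := \matrix_(i, j) (p i == Some j)%:R.
Definition target j := [exists i, p i == Some j].
Definition unpaired i := (p i == None) && ~~ target i.

Lemma row_pairmx i : row i pairmx = if p i is Some j then bvec E j else 0.
Proof.
apply/rowP => j; rewrite !mxE; case: (p i) => [k|]; last by rewrite mxE.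
by rewrite mxE eqxx eq_sym.
Qed.

Lemma row_pairmx_mul n (U : 'M[E]_(N, n)) i :
  row i pairmx *m U = if p i is Some j then row j U else 0.
Proof. by rewrite row_pairmx; case: (p i) => [j|]; rewrite ?mul0mx // -rowE. Qed.

Lemma row_pairmx_bvec i j : row i pairmx = bvec E j -> p i = Some j.
Proof.
rewrite row_pairmx; case: (p i) => [k /bvec_inj -> // | /esym/eqP].
by rewrite (negbTE (bvec_neq0 _ _)).
Qed.

Lemma pairmx_neq0 i j : pairmx i j != 0 -> p i = Some j.
Proof. by rewrite mxE; case: (p i =P Some j) => // _; rewrite eqxx. Qed.

Lemma cspan_mul_pairmx P :
  (cspan E P *m pairmx :=: cspan E [pred j | [exists i, P i && (p i == Some j)]])%MS.
Proof.
apply/eqmxP/andP; split.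
  apply: cspan_mulmx_sub => i j /pairmx_neq0 pij Pi.
  by apply/existsP; exists i; rewrite Pi pij /=.
apply/sumsmx_subP => j /existsP[i /andP[Pi /eqP pij]]; rewrite genmxE.
have -> : bvec E j = bvec E i *m pairmx by rewrite -rowE row_pairmx pij.
by apply/submxMr; rewrite bvec_sub_cspan.
Qed.

Lemma pairmx_eqmx : (pairmx :=: cspan E target)%MS.
Proof.
rewrite -[pairmx in (pairmx :=: _)%MS]mul1mx.
exact: eqmx_trans (eqmx_sym (eqmxMr _ (@cspanT E N))) (cspan_mul_pairmx _).
Qed.

Lemma pairmx_sq0_nil : pairmx *m pairmx = 0 -> forall i j, p i = Some j -> p j = None.
Proof.
move=> P2 i j pij; case pj: (p j) => [l|] //.
have := congr1 (fun M => row i M 0 l) P2.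
rewrite /= row_mul row_pairmx_mul pij row_pairmx pj.
by rewrite !mxE !eqxx /= => /eqP; rewrite oner_eq0.
Qed.

Hypothesis p_inj : forall i i' j, p i = Some j -> p i' = Some j -> i = i'.

Lemma mul_pairmx_target v i j : p i = Some j -> (v *m pairmx) 0 j = v 0 i.
Proof.
move=> pij; rewrite mxE (bigD1 i) //= big1 ?addr0 => [|k ki].
  by rewrite mxE pij eqxx mulr1.
rewrite mxE; case: eqP => [pkj|]; last by rewrite mulr0.
by move: ki; rewrite (p_inj pkj pij) eqxx.
Qed.

Lemma mul_pairmx_nontarget v j : ~~ target j -> (v *m pairmx) 0 j = 0.
Proof.
move=> ntj; rewrite mxE big1 // => k _.
rewrite mxE; case: eqP => [pkj|]; last by rewrite mulr0.
by case/existsP: ntj; exists k; rewrite pkj.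
Qed.

Lemma mul_pairmx_sub_cspanP v Q :
  reflect (forall i j, p i = Some j -> ~~ Q j -> v 0 i = 0) (v *m pairmx <= cspan E Q)%MS.
Proof.
apply: (iffP (sub_cspanP _ _)) => [vQ i j pij nQj | vQ j nQj].
  by rewrite -(mul_pairmx_target v pij) vQ.
have [/existsP[i /eqP pij] | ntj] := boolP (target j); last exact: mul_pairmx_nontarget.
by rewrite (mul_pairmx_target v pij) (vQ i j).
Qed.

Lemma kermx_pairmx : (kermx pairmx :=: cspan E [pred i | p i == None])%MS.
Proof.
apply: eqmx_rowP => v; rewrite sub_kermx.
have -> : (v *m pairmx == 0) = (v *m pairmx <= cspan E pred0)%MS.
  apply/eqP/sub_cspanP => [-> j _ | v0]; first by rewrite mxE.
  by apply/rowP => j; rewrite v0 ?mxE.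
apply/mul_pairmx_sub_cspanP/sub_cspanP => [v0 i | v0 i j pij _].
  by rewrite /=; case pi: (p i) => [j|] // _; apply: v0 pi _.
by rewrite v0 //= pij.
Qed.

Lemma imH_pairmx k :
  (imH pairmx k :=: cspan E [pred s : 'I_N | (s < k)%N && (p s == None) || target s])%MS.
Proof.
apply: eqmx_trans (adds_eqmx (cap_eqmx (eqmx_refl _) kermx_pairmx) pairmx_eqmx) _.
exact: eqmx_trans (adds_eqmx (capmx_cspan E _ _) (eqmx_refl _)) (addsmx_cspan E _ _).
Qed.

Lemma imH_pairmxS_eq (i : 'I_N) : (imH pairmx i.+1 == imH pairmx i)%MS = ~~ unpaired i.
Proof.
rewrite !(imH_pairmx i.+1) !(imH_pairmx i) eqmx_cspan.
apply/forallP/idP => [/(_ i) | npi s]; rewrite /= ltnS_ord ?ltnn.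
  by rewrite eqxx /unpaired; case: (p i == None); case: (target i).
have [-> | _] := eqVneq s i; rewrite ?ltnn ?orbF //.
by move: npi; rewrite /unpaired; case: (p i == None); case: (target i).
Qed.

End Matchings.

Section GradedMatchings.
Variables (E : fieldType) (N : nat) (deg : 'I_N -> int) (p : 'I_N -> option 'I_N).
Hypothesis p_inj : forall i i' j, p i = Some j -> p i' = Some j -> i = i'.
Hypothesis p_deg : forall i j, p i = Some j -> deg j = deg i - 1.
Hypothesis p_lt : forall i j, p i = Some j -> (j < i)%N.
Hypothesis p_nil : forall i j, p i = Some j -> p j = None.
Local Notation Pm := (pairmx E p).

Lemma cyclesA_pairmx l k : (cyclesA deg Pm l k :=:
  cspan E [pred s : 'I_N | [&& (s < k)%N, deg s == l & p s == None]])%MS.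
Proof.
apply: eqmx_trans (cap_eqmx (capmx_cspan E _ _) (kermx_pairmx E p_inj)) _.
apply: eqmx_trans (capmx_cspan E _ _) _.
by apply/eqmxP; rewrite eqmx_cspan; apply/forallP => s; rewrite /= andbA.
Qed.

Lemma boundA_pairmx l :
  (boundA deg Pm l :=: cspan E [pred j | (deg j == l) && target p j])%MS.
Proof.
apply: eqmx_trans (cspan_mul_pairmx _ _ _) _.
apply/eqmxP; rewrite eqmx_cspan; apply/forallP => j /=.
apply/eqP; apply/existsP/andP.
  move=> [i /andP[/eqP di /eqP pij]].
  by split; [rewrite (p_deg pij) di addrK | apply/existsP; exists i; rewrite pij].
move=> [/eqP dj /existsP[i /eqP pij]].
by exists i; rewrite pij eqxx andbT -dj (p_deg pij) subrK.
Qed.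

Lemma imdim_pairmx l k :
  imdim deg Pm l k = #|[pred s : 'I_N | [&& (s < k)%N, deg s == l & unpaired p s]]|.
Proof.
have cycles_bound := adds_eqmx (cyclesA_pairmx l k) (boundA_pairmx l).
rewrite /imdim (eqmx_trans cycles_bound (addsmx_cspan E _ _)).
rewrite boundA_pairmx !mxrank_cspan card_predU_subr.
apply: eq_card => s; rewrite !inE /unpaired.
by case: (s < k)%N; case: (deg s == l); case: (p s == None); case: (target p s).
Qed.

Lemma homdim_pairmx l :
  homdim deg Pm l = #|[pred s | unpaired p s && (deg s == l)]|.
Proof.
rewrite /homdim (cyclesA_pairmx l N) (boundA_pairmx l) !mxrank_cspan.
set C := [pred s : 'I_N | _]; set B := [pred j | _].
have BC : #|C| = #|[predU C & B]|.
  apply: eq_card => j; rewrite !inE; apply/esym/orb_idr.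
  by case/andP => /eqP dj /existsP[i /eqP pij]; rewrite ltn_ord dj eqxx (p_nil pij).
rewrite BC card_predU_subr; apply: eq_card => s; rewrite !inE /unpaired ltn_ord.
by case: (deg s == l); case: (p s == None); case: (target p s); rewrite ?andbF.
Qed.

Definition partner_lt n s := if p s is Some j then (j < n)%N else true.
Definition target_lt m j := [exists i : 'I_N, (i < m)%N && (p i == Some j)].
Definition zrel m n := [pred s : 'I_N | (s < m)%N && partner_lt n s].
Definition brel m n := [pred j : 'I_N | target_lt m j || (j < n)%N].

Lemma relcycles_pairmx m n : (relcycles Pm m n :=: cspan E (zrel m n))%MS.
Proof.
apply: eqmx_rowP => v; rewrite /relcycles sub_capmx sub_kermx mulmxA -submxE.
apply/andP/sub_cspanP => [[/sub_cspanP vm /mul_pairmx_sub_cspanP vn] s | vz].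
  rewrite /= negb_and => /orP[/vm // | ]; rewrite /partner_lt.
  by case ps: (p s) => [j|] // /(vn p_inj s j ps).
split; first by apply/sub_cspanP => s ns; apply: vz; rewrite /= negb_and ns.
apply/mul_pairmx_sub_cspanP => // i j pij nj; apply: vz.
by rewrite /= /partner_lt pij negb_and nj orbT.
Qed.

Lemma relbound_pairmx m n : (subA E N m *m Pm + subA E N n :=: cspan E (brel m n))%MS.
Proof.
apply: eqmx_trans _ (addsmx_cspan E _ _).
exact: adds_eqmx (cspan_mul_pairmx E p (fun i : 'I_N => (i < m)%N)) (eqmx_refl _).
Qed.

Lemma relhomdim_pairmx m n : relhomdim Pm m n = (#|zrel m n| - #|brel m n|)%N.
Proof. by rewrite /relhomdim relcycles_pairmx relbound_pairmx !mxrank_cspan. Qed.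

Lemma card_brel_le m n : (n <= m)%N -> (#|brel m n| <= #|zrel m n|)%N.
Proof.
move=> nm; apply/subset_leq_card/subsetP => j; rewrite !inE /partner_lt.
case/orP => [/existsP[i /andP[im /eqP pij]] | jn].
  by rewrite (p_nil pij) (ltn_trans (p_lt pij) im).
rewrite (leq_trans jn nm); case pj: (p j) => [k|] //; exact: ltn_trans (p_lt pj) jn.
Qed.

Lemma target_ltS (m : 'I_N) j : target_lt m.+1 j = target_lt m j || (p m == Some j).
Proof.
apply/existsP/orP => [[i /andP[] /[!ltnS_ord] /orP[im pij | /eqP -> pmj]] | ].
- by left; apply/existsP; exists i; rewrite im.
- by right.
case=> [/existsP[i /andP[im pij]] | pmj].
  by exists i; rewrite ltnS_ord im.
by exists m; rewrite ltnS_ord eqxx orbT.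
Qed.

Lemma partner_ltS (n : 'I_N) s : partner_lt n.+1 s = partner_lt n s || (p s == Some n).
Proof. by rewrite /partner_lt; case: (p s) => [j|] //=; rewrite ltnS_ord. Qed.

Lemma card_zrelSm (m : 'I_N) n : #|zrel m.+1 n| = (#|zrel m n| + partner_lt n m)%N.
Proof.
rewrite (@card_predU1_if _ (zrel m n) _ (partner_lt n m) m) /= ?ltnn ?andbT // => s.
by rewrite /= ltnS_ord; have [-> | _] := eqVneq s m; rewrite ?ltnn /= ?andbT ?andbF ?orbF.
Qed.

Lemma pair_target_lt (m n : 'I_N) : p m = Some n -> ~~ target_lt m n.
Proof.
move=> pmn; apply/existsP => -[i /andP[im /eqP pin]].
by move: im; rewrite (p_inj pin pmn) ltnn.
Qed.

Lemma card_brelSm (m : 'I_N) n : #|brel m.+1 n| = (#|brel m n| + ~~ partner_lt n m)%N.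
Proof.
rewrite /partner_lt; case pm: (p m) => [j|]; last first.
  by rewrite addn0; apply: eq_card => s; rewrite !inE target_ltS pm orbF.
rewrite (@card_predU1_if _ (brel m n) _ true j) /= => [|s].
  by rewrite /= (negbTE (pair_target_lt pm)) -leqNgt.
rewrite /= target_ltS pm /=; have [-> | sj] := eqVneq s j; first by rewrite eqxx !orbT.
by rewrite (inj_eq Some_inj) eq_sym (negbTE sj) !orbF.
Qed.

Lemma card_zrelSn m (n : 'I_N) : #|zrel m n.+1| = (#|zrel m n| + target_lt m n)%N.
Proof.
have [/existsP[i /andP[im /eqP pin]] | nt] := boolP (target_lt m n).
  rewrite (@card_predU1_if _ (zrel m n) _ true i) /= => [|s].
    by rewrite /partner_lt pin ltnn andbF.
  rewrite /= partner_ltS andb_orr; congr (_ || _).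
  apply/andP/eqP => [[sm /eqP psn] | ->]; first exact: p_inj psn pin.
  by rewrite im pin.
rewrite addn0; apply: eq_card => s; rewrite !inE partner_ltS andb_orr.
rewrite [X in _ || X](_ : _ = false) ?orbF //; apply: contraNF nt => /andP[sm psn].
by apply/existsP; exists s; rewrite sm.
Qed.

Lemma card_brelSn m (n : 'I_N) : #|brel m n.+1| = (#|brel m n| + ~~ target_lt m n)%N.
Proof.
rewrite (@card_predU1_if _ (brel m n) _ true n) /= ?ltnn ?orbF // => s.
by rewrite /= ltnS_ord orbA.
Qed.

Lemma pair_partner_lt (m n : 'I_N) :
  (p m == Some n) = ~~ partner_lt n m && partner_lt n.+1 m.
Proof.
rewrite /partner_lt; case: (p m) => [j|] //=.
rewrite (inj_eq Some_inj) ltnS_ord; have [-> | _] := eqVneq j n; first by rewrite ltnn.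
by rewrite orbF andNb.
Qed.

(* Used with x := target_lt m n, r0 := partner_lt n m and r1 := partner_lt n.+1 m; the
   hypotheses are [card_brel_le] at the four corners (m, n), ..., (m.+1, n.+1). *)
Lemma relhomdim_window_arith (a b : nat) (x r0 r1 : bool) :
  (b <= a)%N -> (b + ~~ x <= a + x)%N -> (b + ~~ r0 <= a + r0)%N ->
  (b + ~~ x + ~~ r1 <= a + x + r1)%N ->
  [/\ (a + x + r1 - (b + ~~ x + ~~ r1) = a - b)%N,
      (a - b = a + x - (b + ~~ x) + 1)%N &
      (a + x - (b + ~~ x) + 1 = a + r0 - (b + ~~ r0) + 1)%N]
  <-> [&& ~~ x, ~~ r0 & r1].
Proof. by case: x; case: r0; case: r1 => /= *; split => [[] | // _]; try split; lia. Qed.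

Lemma relhomdim_pairmx_pairP (m n : 'I_N) : (n < m)%N ->
  (p m = Some n <->
   [/\ relhomdim Pm m.+1 n.+1 = relhomdim Pm m n,
       relhomdim Pm m n = (relhomdim Pm m n.+1 + 1)%N &
       (relhomdim Pm m n.+1 + 1)%N = (relhomdim Pm m.+1 n + 1)%N]).
Proof.
move=> nm; have := card_brel_le (leqW nm); have := card_brel_le (leqW (ltnW nm)).
have := card_brel_le nm; have := card_brel_le (ltnW nm).
rewrite !relhomdim_pairmx !card_zrelSm !card_brelSm !card_zrelSn !card_brelSn.
move=> b0 b1 b2 b3; apply: iff_trans _ (iff_sym (relhomdim_window_arith b0 b1 b2 b3)).
split => [pmn | /and3P[_ r0 r1]]; last by apply/eqP; rewrite pair_partner_lt r0 r1.
by rewrite (negbTE (pair_target_lt pmn)) -pair_partner_lt pmn eqxx.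
Qed.

End GradedMatchings.

Section ElementaryForms.
Variables (E : fieldType) (N : nat) (deg : 'I_N -> int).

Definition graded_pairing (p : 'I_N -> option 'I_N) :=
  [/\ forall i i' j, p i = Some j -> p i' = Some j -> i = i',
      forall i j, p i = Some j -> deg j = deg i - 1,
      forall i j, p i = Some j -> (j < i)%N &
      forall i j, p i = Some j -> p j = None].

Lemma Mdiff_pairmx p : graded_pairing p -> Mdiff deg (pairmx E p).
Proof.
case=> _ pdeg plt pnil; split.
- by move=> i j /pairmx_neq0 /pdeg.
- apply/row_matrixP => i; rewrite row_mul row_pairmx_mul row0.
  by case pi: (p i) => [j|] //; rewrite row_pairmx (pnil _ _ pi).
- by move=> i j /pairmx_neq0 /plt.
Qed.

Lemma elementary_pairmx p : graded_pairing p -> elementary (pairmx E p).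
Proof.
case=> pinj _ _ _; split => [i | x y z /row_pairmx_bvec px /row_pairmx_bvec py].
  by rewrite row_pairmx; case: (p i) => [j|]; [right; exists j | left].
exact: pinj px py.
Qed.

Lemma elementary_pairmx_form D1 : Mdiff deg D1 -> elementary D1 ->
  exists2 p, D1 = pairmx E p & graded_pairing p.
Proof.
case=> D1deg D1sq D1lt [el1 el2].
pose p : 'I_N -> option 'I_N := fun i => [pick j | row i D1 == bvec E j].
have eD : D1 = pairmx E p.
  apply/row_matrixP => i; rewrite row_pairmx /p; case: pickP => [j /eqP -> // | none].
  by case: (el1 i) => [-> // | [j e]]; move: (none j); rewrite e eqxx.
have P2 : pairmx E p *m pairmx E p = 0 by rewrite -eD.
exists p => //; split => [i i' j pij pi'j | i j pij | i j pij | i j].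
- by apply: (el2 _ _ j); rewrite eD row_pairmx ?pij ?pi'j.
- by apply: (D1deg i j); rewrite eD mxE pij eqxx oner_eq0.
- by apply: (D1lt i j); rewrite eD mxE pij eqxx oner_eq0.
- by move=> /(pairmx_sq0_nil P2).
Qed.

End ElementaryForms.

(** * Barannikov reduction *)

Section AdaptedBases.
Variables (E : fieldType) (N : nat) (deg : 'I_N -> int).
Implicit Types (U : 'M[E]_N) (w : 'rV[E]_N).

Definition adapted (k : 'I_N) w :=
  [/\ w 0 k != 0, forall j, w 0 j != 0 -> (j <= k)%N
    & forall j, w 0 j != 0 -> deg j = deg k].

Definition adapted_basis U := forall k, adapted k (row k U).

Definition set_row U (k : 'I_N) w : 'M[E]_N := \matrix_l (if l == k then w else row l U).

Lemma row_set_row U k w l : row l (set_row U k w) = if l == k then w else row l U.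
Proof. exact: rowK. Qed.

Lemma adapted_basis_entry U k j :
  adapted_basis U -> U k j != 0 -> (j <= k)%N /\ deg j = deg k.
Proof.
move=> aU nz; have [_ lt dg] := aU k; move: (lt j) (dg j); rewrite mxE.
by move=> /(_ nz) ? /(_ nz).
Qed.

Lemma adapted_basis_unitmx U : adapted_basis U -> U \in unitmx.
Proof.
move=> aU; rewrite unitmxE det_trig ?unitfE.
  by apply/prodf_neq0 => k _; have [] := aU k; rewrite mxE.
apply/is_trig_mxP => k j kj; apply: contraTeq kj => /(adapted_basis_entry aU)[jk _].
by rewrite -leqNgt.
Qed.

Lemma adapted_basis_AutT U : adapted_basis U -> AutT deg (invmx U).
Proof.
move=> aU; have uU := adapted_basis_unitmx aU; split; first by rewrite unitmx_inv.
  move=> k j nz; apply/eqP.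
  apply: (closed_invmx (P := fun a => deg a == deg k) uU _ nz) => //.
  by move=> a b /(adapted_basis_entry aU)[_ ->].
move=> k j nz; apply: (closed_invmx (P := fun a : 'I_N => (a <= k)%N) uU _ nz) => //.
by move=> a b /(adapted_basis_entry aU)[ba _]; apply: leq_trans.
Qed.

Lemma mulmx_adapted_support U w j : adapted_basis U -> (w *m U) 0 j != 0 ->
  exists2 k, w 0 k != 0 & (j <= k)%N /\ deg j = deg k.
Proof.
move=> aU nz; have /existsP[k /andP[wk Ukj]] : [exists k, (w 0 k != 0) && (U k j != 0)].
  apply: contraNT nz => /existsPn wU; rewrite mxE big1 // => k _.
  by move: (wU k); rewrite negb_and !negbK => /orP[] /eqP->; rewrite ?mul0r ?mulr0.
by exists k => //; apply: adapted_basis_entry.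
Qed.

Lemma mulmx_adapted U w j0 : adapted_basis U -> w 0 j0 != 0 ->
  (forall k, w 0 k != 0 -> (k <= j0)%N /\ deg k = deg j0) -> adapted j0 (w *m U).
Proof.
move=> aU wj0 wsupp; split.
- rewrite mxE (bigD1 j0) //= big1 ?addr0 => [|k kj0].
    by rewrite mulf_neq0 //; have [] := aU j0; rewrite mxE.
  have [-> | wk] := eqVneq (w 0 k) 0; first by rewrite mul0r.
  have [kj0' _] := wsupp k wk.
  have [-> | /(adapted_basis_entry aU)[j0k _]] := eqVneq (U k j0) 0; first by rewrite mulr0.
  by case/eqP: kj0; apply/val_inj/eqP; rewrite eqn_leq kj0' j0k.
- by move=> j /(mulmx_adapted_support aU)[k /wsupp[kj0 _] [jk _]]; apply: leq_trans kj0.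
- by move=> j /(mulmx_adapted_support aU)[k /wsupp[_ <-] [_ ->]].
Qed.

End AdaptedBases.

Section Reduction.
Variables (E : fieldType) (N : nat) (deg : 'I_N -> int) (D : 'M[E]_N).
Hypothesis hD : Mdiff deg D.

Record reduced (i : nat) (U : 'M[E]_N) (p : 'I_N -> option 'I_N) : Prop := Reduced {
  reduced_basis : adapted_basis deg U;
  reduced_act : forall k : 'I_N, (k < i)%N ->
    row k U *m D = if p k is Some j then row j U else 0;
  reduced_inj : forall k k' j, p k = Some j -> p k' = Some j -> k = k';
  reduced_lt : forall k j, p k = Some j -> (j < k)%N;
  reduced_deg : forall k j, p k = Some j -> deg j = deg k - 1;
  reduced_none : forall k : 'I_N, (i <= k)%N -> p k = None }.

Lemma reduced0 : reduced 0 1%:M (fun _ => None).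
Proof.
split=> // k; split=> [|j|j]; rewrite !mxE ?eqxx ?oner_eq0 //;
  by case: (eqVneq k j) => [-> | _]; rewrite /= ?mulr0n ?eqxx.
Qed.

Lemma reduced_mulmxD i U p : reduced i U p ->
  forall x : 'rV[E]_N, (forall k, x 0 k != 0 -> (k < i)%N) ->
  x *m U *m D = x *m pairmx E p *m U.
Proof.
move=> red x xi; rewrite -!mulmxA !mulmx_sum_row; apply: eq_bigr => k _.
have [-> | /xi ki] := eqVneq (x 0 k) 0; first by rewrite !scale0r.
by rewrite !row_mul row_pairmx_mul (reduced_act red ki).
Qed.

Lemma reduced_set_cycle i U p (j : 'I_N) r : reduced i U p -> (j < i)%N -> p j = None ->
  ~~ target p j -> adapted deg j r -> r *m D = 0 -> reduced i (set_row U j r) p.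
Proof.
case=> aU act inj lt dg none ji pj ntj rj rD; split=> // k.
  by rewrite row_set_row; case: eqP => [-> | _].
move=> ki; rewrite row_set_row; have [-> | kj] := eqVneq k j; first by rewrite pj.
rewrite act //; case pk: (p k) => [l|] //; rewrite row_set_row.
case: eqVneq => [lj | //]; case/negP: ntj; apply/existsP; exists k; by rewrite pk lj.
Qed.

Lemma reduced_extend (i : 'I_N) U p u q : reduced i U p -> adapted deg i u ->
  u *m D = (if q is Some j then row j U else 0) ->
  (forall j, q = Some j -> [/\ (j < i)%N, ~~ target p j & deg j = deg i - 1]) ->
  reduced i.+1 (set_row U i u) (fun k => if k == i then q else p k).
Proof.
case=> aU act inj lt dg none ui uD qP; split.
- by move=> k; rewrite row_set_row; case: eqP => [-> | _].
- move=> k; rewrite ltnS_ord row_set_row => /orP[ki | /eqP ->]; last first.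
    rewrite eqxx uD; case qj: q => [j|] //; have [ji _ _] := qP j qj.
    by rewrite row_set_row ord_ltn_eqF.
  rewrite ord_ltn_eqF // act //; case pk: (p k) => [j|] //.
  by rewrite row_set_row ord_ltn_eqF // (ltn_trans (lt _ _ pk)).
- move=> k k' j; have [-> | ki] := eqVneq k i; have [-> | k'i] := eqVneq k' i => // pk pk'.
  + have [_ /negP ntj _] := qP j pk; case: ntj; apply/existsP; exists k'; by rewrite pk'.
  + have [_ /negP ntj _] := qP j pk'; case: ntj; apply/existsP; exists k; by rewrite pk.
  + exact: inj pk pk'.
- by move=> k j; case: eqVneq => [-> /qP[] | _ /lt].
- by move=> k j; case: eqVneq => [-> /qP[] | _ /dg].
- by move=> k ik; rewrite eq_sym ord_ltn_eqF // none // ltnW.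
Qed.

Section Step.
Variables (i : 'I_N) (U : 'M[E]_N) (p : 'I_N -> option 'I_N).
Hypothesis red : reduced i U p.

Let aU : adapted_basis deg U := reduced_basis red.
Let uU : U \in unitmx := adapted_basis_unitmx aU.
(* c holds the coordinates of a_i D in the basis U.  Subtracting e U from a_i removes its
   coordinates on the targets u_(p s), so that u D = c' U with c' supported on unpaired
   cycles. *)
Let c := row i D *m invmx U.
Let c' := \row_k (if target p k then 0 else c 0 k).
Let e := \row_s (if p s is Some k then c 0 k else 0).
Let u := bvec E i - e *m U.

Lemma boundary_coord_support k :
  c 0 k != 0 -> [/\ (k < i)%N, deg k = deg i - 1 & p k = None].
Proof.
have aUinv := adapted_basis_AutT aU; have [D_deg D_sq D_lt] := hD.
have /sub_cspanP c_lt : (c <= subA E N i)%MS.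
  rewrite -(AutT_subA aUinv i) submxMr //; apply/sub_cspanP => j.
  by apply: contraNeq; rewrite mxE => /D_lt.
have /sub_cspanP c_deg : (c <= gradedA E deg (deg i - 1))%MS.
  rewrite -(AutT_gradedA aUinv) submxMr //; apply/sub_cspanP => j.
  by apply: contraNeq; rewrite mxE => /D_deg ->.
have cP : c *m pairmx E p = 0.
  apply/eqP; rewrite -(mulmx_free_eq0 _ (_ : row_free U)) ?row_free_unit //.
  rewrite -(reduced_mulmxD red) => [|j]; last by apply: contraNT => /c_lt ->.
  by rewrite mulmxKV // -row_mul D_sq row0.
move=> ck; split.
- by apply: contraNT ck => /c_lt ->.
- by apply/eqP; apply: contraNT ck => /c_deg ->.
- case pk: (p k) => [j|] //; move: ck.
  by rewrite -(mul_pairmx_target (reduced_inj red) c pk) cP mxE eqxx.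
Qed.

Lemma boundary_coord_split : c = c' + e *m pairmx E p.
Proof.
apply/rowP => k; rewrite [RHS]mxE [c' 0 k]mxE; case: ifP => [/existsP[s /eqP psk] | ntk].
  by rewrite (mul_pairmx_target (reduced_inj red) e psk) [e 0 s]mxE psk add0r.
by rewrite mul_pairmx_nontarget ?ntk ?addr0.
Qed.

Lemma correction_coord_support s : e 0 s != 0 -> (s < i)%N /\ deg s = deg i.
Proof.
rewrite mxE; case ps: (p s) => [k|]; rewrite ?eqxx // => /boundary_coord_support[_ dk _].
split; first by rewrite ltnNge; apply/negP => /(reduced_none red); rewrite ps.
by move: dk; rewrite (reduced_deg red ps) => /addIr.
Qed.

Lemma correction_mulD : u *m D = c' *m U.
Proof.
have -> : c' *m U = row i D - e *m pairmx E p *m U.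
  by rewrite -[row i D](mulmxKV uU) -/c {1}boundary_coord_split mulmxDl addrK.
by rewrite mulmxBl -rowE (reduced_mulmxD red) // => s /correction_coord_support[].
Qed.

Lemma correction_adapted : adapted deg i u.
Proof.
have eU j : (e *m U) 0 j != 0 -> (j < i)%N /\ deg j = deg i.
  case/(mulmx_adapted_support aU) => s /correction_coord_support[si dsi] [js djs].
  by split; [exact: leq_ltn_trans js si | rewrite djs].
have uE j : u 0 j = (j == i)%:R - (e *m U) 0 j.
  by rewrite /u mxE bvecE mxE.
split => [|j|j]; rewrite uE.
- have [-> | /eU[]] := eqVneq ((e *m U) 0 i) 0; first by rewrite subr0 eqxx oner_eq0.
  by rewrite ltnn.
- by have [-> // | _] := eqVneq j i; rewrite /= sub0r oppr_eq0 => /eU[/ltnW].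
- by have [-> // | _] := eqVneq j i; rewrite /= sub0r oppr_eq0 => /eU[].
Qed.

Lemma reduced_step : exists U' p', reduced i.+1 U' p'.
Proof.
have [c'0 | c'n0] := eqVneq c' 0.
  exists (set_row U i u), (fun k => if k == i then None else p k).
  by apply: reduced_extend correction_adapted _ _ => //; rewrite correction_mulD c'0 mul0mx.
have c'_support k :
    c' 0 k != 0 -> [/\ (k < i)%N, deg k = deg i - 1, p k = None & ~~ target p k].
  rewrite mxE; case: ifP => [_ | /negbT ntk /boundary_coord_support[] //].
  by rewrite eqxx.
have c'P : c' *m pairmx E p = 0.
  apply/rowP => j; rewrite [RHS]mxE.
  have [/existsP[s /eqP psj] | ntj] := boolP (target p j); last exact: mul_pairmx_nontarget.
  rewrite (mul_pairmx_target (reduced_inj red) c' psj).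
  by case: (eqVneq (c' 0 s) 0) => // /c'_support[_ _]; rewrite psj.
have /existsP[k0 ck0] : [exists k, c' 0 k != 0].
  apply: contraNT c'n0 => /existsPn c'0; apply/eqP/rowP => k.
  by rewrite [RHS]mxE; apply/eqP/negbNE.
(* The highest index j0 of c' gets paired with i, after u_j0 is replaced by the cycle
   c' U, whose leading index is still j0. *)
case: (@arg_maxnP _ k0 (fun k => c' 0 k != 0) val ck0) => j0 cj0 j0max.
have [j0i dj0 pj0 ntj0] := c'_support j0 cj0.
have r_adapted : adapted deg j0 (c' *m U).
  apply: mulmx_adapted aU cj0 _ => k ck; have [_ dk _ _] := c'_support k ck.
  by split; [exact: j0max | rewrite dk dj0].
have rD : c' *m U *m D = 0.
  by rewrite (reduced_mulmxD red) ?c'P ?mul0mx // => k /c'_support[].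
have red1 := reduced_set_cycle red j0i pj0 ntj0 r_adapted rD.
exists (set_row (set_row U j0 (c' *m U)) i u), (fun k => if k == i then Some j0 else p k).
apply: reduced_extend red1 correction_adapted _ _ => [|j [<-] //].
by rewrite correction_mulD row_set_row eqxx.
Qed.

End Step.

Lemma reduced_exists i : (i <= N)%N -> exists U p, reduced i U p.
Proof.
elim: i => [_ | i IH iN]; first by exists 1%:M, (fun _ => None); exact: reduced0.
have [U [p red]] := IH (ltnW iN).
exact: (@reduced_step (Ordinal iN) U p red).
Qed.

End Reduction.

(** * Essential elements and pairs *)

Section Characterization.
Variables (E : fieldType) (N : nat) (deg : 'I_N -> int) (D : 'M[E]_N).
Hypothesis hD : Mdiff deg D.

Lemma equiv_pairmx_exists :
  exists2 p, graded_pairing deg p & equivM deg D (pairmx E p).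
Proof.
have [U [p [aU act inj lt dg _]]] := reduced_exists hD (leqnn N).
have uU := adapted_basis_unitmx aU; have [_ D_sq _] := hD.
have eP : pairmx E p = invmx (invmx U) *m D *m invmx U.
  suff UD : U *m D = pairmx E p *m U by rewrite invmxK UD mulmxK.
  by apply/row_matrixP => k; rewrite !row_mul row_pairmx_mul act.
exists p; last by exists (invmx U); split => //; exact: adapted_basis_AutT.
split => // i j; apply: (@pairmx_sq0_nil E).
rewrite eP invmxK -!mulmxA (mulmxA (invmx U)) mulVmx // mul1mx.
by rewrite (mulmxA D) D_sq mul0mx mulmx0.
Qed.

Lemma dpairP i j : dpair deg D i j <->
  exists2 p, graded_pairing deg p & equivM deg D (pairmx E p) /\ p i = Some j.
Proof.
split => [[D1 [md [el [eqv r]]]] | [p pp [eqv pij]]].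
  have [p eD pp] := elementary_pairmx_form md el.
  by exists p => //; split; [rewrite -eD | move: r; rewrite eD => /row_pairmx_bvec].
exists (pairmx E p); split; first exact: Mdiff_pairmx.
by split; [exact (elementary_pairmx E pp) | split => //; rewrite row_pairmx pij].
Qed.

Lemma unpairedE p : graded_pairing deg p -> equivM deg D (pairmx E p) ->
  forall i : 'I_N, unpaired p i = ~~ (imH D i.+1 == imH D i)%MS.
Proof.
case=> pinj _ _ _ [G [aG eD]] i.
by rewrite -(imH_eq_conj D aG) -eD imH_pairmxS_eq // negbK.
Qed.

(* The elementary form is not known to be unique, but all graded matchings equivalent to D
   have the same unpaired elements, by [unpairedE]. *)
Lemma essential_unpaired p : graded_pairing deg p -> equivM deg D (pairmx E p) ->
  forall i, essential deg D i <-> unpaired p i.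
Proof.
move=> pp eqv i; split => [ess | up j].
  rewrite /unpaired; case pi: (p i) => [j|] /=.
    by case: (ess j) => [[]]; apply/dpairP; exists p.
  by apply/negP => /existsP[s /eqP psi]; case: (ess s) => _ []; apply/dpairP; exists p.
split => /dpairP[p' pp' [eqv' p'ij]]; move: up.
  by rewrite (unpairedE pp eqv) -(unpairedE pp' eqv') /unpaired p'ij.
rewrite (unpairedE pp eqv) -(unpairedE pp' eqv') /unpaired => /andP[_ /negP]; apply.
by apply/existsP; exists j; rewrite p'ij.
Qed.

Lemma essential_imdimP (i : 'I_N) :
  essential deg D i <-> imdim deg D (deg i) i.+1 = (imdim deg D (deg i) i + 1)%N.
Proof.
have [p pp eqv] := equiv_pairmx_exists; have [G [aG eD]] := eqv.
have [pinj pdeg _ _] := pp.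
apply: iff_trans (essential_unpaired pp eqv i) _.
rewrite -!(imdim_conj D aG) -eD !imdim_pairmx //.
set A := [pred s : 'I_N | [&& (s < i)%N, deg s == deg i & unpaired p s]].
rewrite (@card_predU1_if _ A _ (unpaired p i) i) => [|s]; last first.
  rewrite /= ltnS_ord; have [-> | _] := eqVneq s i;
  by rewrite ?ltnn ?eqxx /= ?andbT ?andbF ?orbF.
have -> : A i = false by rewrite /A /= ltnn.
by case: (unpaired p i); split => //= /addnI.
Qed.

Lemma card_essential k : exists S : {set 'I_N},
  (forall i, i \in S <-> essential deg D i /\ deg i = k) /\ #|S| = homdim deg D k.
Proof.
have [p pp eqv] := equiv_pairmx_exists; have [G [aG eD]] := eqv.
have [pinj pdeg _ pnil] := pp.
exists [set s | unpaired p s && (deg s == k)]; split => [i|].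
  rewrite inE; split => [/andP[up /eqP dk] | [ess ->]]; last first.
    by rewrite eqxx andbT; apply/(essential_unpaired pp eqv).
  by split => //; apply/(essential_unpaired pp eqv).
by rewrite -(homdim_conj D aG) -eD homdim_pairmx //; apply: eq_card => s; rewrite inE.
Qed.

Lemma not_essential_imH (i : 'I_N) : ~ essential deg D i <-> (imH D i.+1 == imH D i)%MS.
Proof.
have [p pp eqv] := equiv_pairmx_exists.
rewrite -[(imH D _ == _)%MS]negbK -(unpairedE pp eqv).
split => [ness | /negP nup ess]; last exact/nup/(essential_unpaired pp eqv).
by apply/negP => /(essential_unpaired pp eqv).
Qed.

Lemma dpair_relhomdimP (m n : 'I_N) : (n < m)%N ->
  (dpair deg D m n <->
   [/\ relhomdim D m.+1 n.+1 = relhomdim D m n,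
       relhomdim D m n = (relhomdim D m n.+1 + 1)%N &
       (relhomdim D m n.+1 + 1)%N = (relhomdim D m.+1 n + 1)%N]).
Proof.
move=> nm.
have pairP p : graded_pairing deg p -> equivM deg D (pairmx E p) ->
    (p m = Some n <-> [/\ relhomdim D m.+1 n.+1 = relhomdim D m n,
       relhomdim D m n = (relhomdim D m n.+1 + 1)%N &
       (relhomdim D m n.+1 + 1)%N = (relhomdim D m.+1 n + 1)%N]).
  case=> pinj _ plt pnil [G [aG eD]].
  by rewrite -!(relhomdim_conj D aG) -eD; apply: relhomdim_pairmx_pairP.
split => [/dpairP[p pp [eqv pmn]] | ]; first exact/(pairP p pp eqv).
have [p pp eqv] := equiv_pairmx_exists.
by move/(pairP p pp eqv) => pmn; apply/dpairP; exists p.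
Qed.

End Characterization.

Theorem lemma3p2 (E : fieldType) (N : nat) (deg : 'I_N -> int)
    (D : 'M[E]_N) (hD : Mdiff deg D) :
  (* (1) *)
  ((forall (i : 'I_N) (l : int), deg i = l ->
      (essential deg D i <->
       imdim deg D l i.+1 = (imdim deg D l i + 1)%N)) /\
   (forall k : int,
      exists S : {set 'I_N},
        (forall i, i \in S <-> essential deg D i /\ deg i = k) /\
        #|S| = homdim deg D k)) /\
  (* (2) *)
  (forall i : 'I_N,
      ~ essential deg D i <-> (imH D i.+1 == imH D i)%MS) /\
  (* (3) *)
  (forall m n : 'I_N, (n < m)%N ->
      (dpair deg D m n <->
       [/\ relhomdim D m.+1 n.+1 = relhomdim D m n,
           relhomdim D m n = (relhomdim D m n.+1 + 1)%N &
           (relhomdim D m n.+1 + 1)%N = (relhomdim D m.+1 n + 1)%N])).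
Proof.
split; [split | split].
- by move=> i l <-; exact: essential_imdimP.
- exact: card_essential.
- exact: not_essential_imH.
- exact: dpair_relhomdimP.
Qed.
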